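(* Let $f$ satisfy the standing assumptions below, and for $\xi,u_3\in(0,1)$ define $$G_0(\xi,u_3)=\frac{1}{4\sqrt2}\int_{-1}^{1}f'\!\left(\frac{1-\mu}{2}u_3+\frac{1+\mu}{2}\xi\right)\sqrt{1-\mu}\,d\mu,\qquad V_0(\xi,u_3)=\frac{4}{15}\xi+\frac25u_3 .$$ Then, for $u_3$ sufficiently close to $0$, the minimization problem $\min_{0<\xi<1}\left[-G_0(\xi,u_3)/V_0(\xi,u_3)\right]$ has one and only one critical point in $(0,1)$, and hence one and only one minimizing point. Furthermore, this critical point tends to $1$ as $u_3\to0$.
   Context: Standing assumptions: $f:(0,1)\to\mathbb{R}$ is the inverse of a smooth strictly decreasing function $u_0:\mathbb{R}\to(0,1)$ with $u_0(-\infty)=1$, $u_0(+\infty)=0$; thus $f$ is smooth with $f'<0$, $\lim_{u\to0}f(u)=+\infty$, $\lim_{u\to1}f(u)=-\infty$; moreover $f'''(u)<0$ for $u$ in a neighborhood of $0$ and in a neighborhood of $1$. *)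

From Stdlib Require Import Reals.
From Coquelicot Require Import Coquelicot.
Open Scope R_scope.

Definition G0 (f : R -> R) (xi u3 : R) : R :=
  / (4 * sqrt 2) *
  RInt (fun mu => Derive f ((1 - mu) / 2 * u3 + (1 + mu) / 2 * xi) * sqrt (1 - mu))
       (-1) 1.

Definition V0 (xi u3 : R) : R := 4 / 15 * xi + 2 / 5 * u3.

Definition J0 (f : R -> R) (xi u3 : R) : R := - G0 f xi u3 / V0 xi u3.

From Stdlib Require Import Reals Lra Psatz Classical ClassicalEpsilon Ranalysis5.
From Coquelicot Require Import Coquelicot.
Open Scope R_scope.

(* Write a = u3, p(m) = ((1 - m) a + (1 + m) xi) / 2 for the point of [a, xi] at parameter
   m in [-1, 1] ([segpt a xi m]), and
     M_k(a, xi) = int_{-1}^{1} f^(k+1)(p(m)) ((1 + m)/2)^k sqrt(1 - m) dm   ([moment k a xi]).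
   Then G0 = M_0 / (4 sqrt 2) and d/dxi M_k = M_(k+1), so d/dxi J0 = - N / (4 sqrt 2 V0^2) with
   N = V0 M_1 - (4/15) M_0 ([numer]) and d/dxi N = V0 M_2.
   For small a, M_2(a, .) < 0 on (0, 1): where a and xi are both small this is f''' < 0 near 0;
   otherwise three integrations by parts expose a term -4 f(a) / (xi - a)^3, which tends to -oo,
   while f''' is bounded above away from 0 since f''' < 0 near 1. Hence N(a, .) is strictly
   decreasing, and a zero of N is the unique critical point and the strict minimiser of J0(., a).
   A zero exists: for fixed xi, N(a, xi) > 0 for small a because M_0(a, xi) -> -oo while M_1 stays
   bounded below; and N(a, .) takes negative values, for otherwise M_0 / V0 is nondecreasing, so
   M_1(a, xi) stays bounded below as xi -> 1, which forces f'(u) >= -K - C / sqrt(1 - u) near 1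
   and keeps f bounded below there, contradicting f(1-) = -oo. Positivity of N(a, xi) for every
   fixed xi < 1 also pushes the zero to 1 as a -> 0. *)

Lemma continuous_of_is_derive (g : R -> R) x l : is_derive g x l -> continuous g x.
Proof. intros H. apply (ex_derive_continuous (V := R_NormedModule)). exists l; exact H. Qed.

Lemma ex_RInt_of_continuous (h : R -> R) p q :
  p <= q -> (forall z, p <= z <= q -> continuous h z) -> ex_RInt h p q.
Proof.
  intros Hpq Hh. apply (ex_RInt_continuous (V := R_CompleteNormedModule)).
  intros z. rewrite Rmin_left, Rmax_right by exact Hpq. apply Hh.
Qed.

Lemma RInt_Chasles_R (h : R -> R) p q r : ex_RInt h p q -> ex_RInt h q r ->
  RInt h p r = RInt h p q + RInt h q r.
Proof. intros Hpq Hqr. symmetry. exact (RInt_Chasles h p q r Hpq Hqr). Qed.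

Lemma RInt_le_const (h : R -> R) c p q : p <= q -> ex_RInt h p q ->
  (forall m, p < m < q -> h m <= c) -> RInt h p q <= (q - p) * c.
Proof.
  intros Hpq He H.
  replace ((q - p) * c) with (RInt (fun _ => c) p q) by (rewrite RInt_const; reflexivity).
  apply RInt_le; auto. apply ex_RInt_const.
Qed.

Lemma RInt_ge_const (h : R -> R) c p q : p <= q -> ex_RInt h p q ->
  (forall m, p < m < q -> c <= h m) -> (q - p) * c <= RInt h p q.
Proof.
  intros Hpq He H.
  replace ((q - p) * c) with (RInt (fun _ => c) p q) by (rewrite RInt_const; reflexivity).
  apply RInt_le; auto. apply ex_RInt_const.
Qed.

Lemma MVT_interval (g dg : R -> R) p q : p < q ->
  (forall x, p <= x <= q -> is_derive g x (dg x)) ->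
  exists c, p <= c <= q /\ g q - g p = dg c * (q - p).
Proof.
  intros Hpq Hd.
  destruct (MVT_gen g p q dg) as [c [Hc E]]; rewrite ?Rmin_left, ?Rmax_right in * by lra.
  - intros x Hx. apply Hd. lra.
  - intros x Hx. apply continuity_pt_filterlim, (continuous_of_is_derive _ _ (dg x)), Hd, Hx.
  - exists c. split; assumption.
Qed.

Lemma lt_of_derive_neg (g dg : R -> R) p q : p < q ->
  (forall x, p <= x <= q -> is_derive g x (dg x)) ->
  (forall x, p <= x <= q -> dg x < 0) -> g q < g p.
Proof.
  intros Hpq Hd Hneg. destruct (MVT_interval g dg p q Hpq Hd) as [c [Hc E]].
  specialize (Hneg c Hc). nra.
Qed.

Lemma lt_of_derive_pos (g dg : R -> R) p q : p < q ->
  (forall x, p <= x <= q -> is_derive g x (dg x)) ->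
  (forall x, p <= x <= q -> 0 < dg x) -> g p < g q.
Proof.
  intros Hpq Hd Hpos. destruct (MVT_interval g dg p q Hpq Hd) as [c [Hc E]].
  specialize (Hpos c Hc). nra.
Qed.

Lemma le_of_derive_nonpos (g dg : R -> R) p q : p <= q ->
  (forall x, p <= x <= q -> is_derive g x (dg x)) ->
  (forall x, p <= x <= q -> dg x <= 0) -> g q <= g p.
Proof.
  intros Hpq Hd Hneg. destruct (Req_dec p q) as [<-|Hne]; [lra|].
  destruct (MVT_interval g dg p q ltac:(lra) Hd) as [c [Hc E]].
  specialize (Hneg c Hc). nra.
Qed.

Lemma le_of_derive_nonneg (g dg : R -> R) p q : p <= q ->
  (forall x, p <= x <= q -> is_derive g x (dg x)) ->
  (forall x, p <= x <= q -> 0 <= dg x) -> g p <= g q.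
Proof.
  intros Hpq Hd Hpos. destruct (Req_dec p q) as [<-|Hne]; [lra|].
  destruct (MVT_interval g dg p q ltac:(lra) Hd) as [c [Hc E]].
  specialize (Hpos c Hc). nra.
Qed.

Lemma strict_argmin_of_derive_sign (g dg : R -> R) l r z :
  l < z < r -> (forall x, l < x < r -> is_derive g x (dg x)) -> dg z = 0 ->
  (forall x, l < x < z -> dg x < 0) -> (forall x, z < x < r -> 0 < dg x) ->
  forall y, l < y < r -> y <> z -> g z < g y.
Proof.
  intros Hz Hd Hdz Hneg Hpos y Hy Hyz.
  set (m := (y + z) / 2).
  assert (Hderiv : forall p q x, l < p -> q < r -> p <= x <= q -> is_derive g x (dg x))
    by (intros; apply Hd; lra).
  destruct (Rlt_or_le y z) as [Hlt|Hge].
  - assert (g m < g y).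
    { apply (lt_of_derive_neg g dg); try (intros; apply (Hderiv y m)); unfold m in *; try lra.
      intros x Hx. apply Hneg. lra. }
    assert (g z <= g m).
    { apply (le_of_derive_nonpos g dg); try (intros; apply (Hderiv m z)); unfold m in *; try lra.
      intros x Hx. destruct (Req_dec x z) as [->|]; [lra|]. left; apply Hneg; lra. }
    lra.
  - assert (g m < g y).
    { apply (lt_of_derive_pos g dg); try (intros; apply (Hderiv m y)); unfold m in *; try lra.
      intros x Hx. apply Hpos. lra. }
    assert (g z <= g m).
    { apply (le_of_derive_nonneg g dg); try (intros; apply (Hderiv z m)); unfold m in *; try lra.
      intros x Hx. destruct (Req_dec x z) as [->|]; [lra|]. left; apply Hpos; lra. }
    lra.
Qed.

Lemma bounded_below_of_derive_ge (g dg : R -> R) K C s :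
  s < 1 -> 0 <= K -> 0 <= C ->
  (forall u, s <= u < 1 -> is_derive g u (dg u)) ->
  (forall u, s <= u < 1 -> - K - C / sqrt (1 - u) <= dg u) ->
  forall u, s <= u < 1 -> g s - K * (1 - s) - 2 * C * sqrt (1 - s) <= g u.
Proof.
  intros Hs HK HC Hd Hdg u Hu.
  set (h := fun u => g u + (K * u - 2 * C * sqrt (1 - u))).
  assert (Hh : h s <= h u).
  { apply (le_of_derive_nonneg h (fun u => dg u + (K + C / sqrt (1 - u)))); [lra| |].
    - intros y Hy. assert (0 < sqrt (1 - y)) by (apply sqrt_lt_R0; lra).
      assert (Hr : is_derive (fun u => K * u - 2 * C * sqrt (1 - u)) y (K + C / sqrt (1 - y))).
      { auto_derive; [lra|]. unfold Rminus in *. field. lra. }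
      exact (is_derive_plus _ _ _ _ _ (Hd y ltac:(lra)) Hr).
    - intros y Hy. specialize (Hdg y ltac:(lra)). lra. }
  unfold h in Hh. pose proof (sqrt_pos (1 - u)). nra.
Qed.

Lemma filterlim_at_right_0_locally_1 (g : R -> R) :
  (forall xs, xs < 1 -> exists d, 0 < d /\ forall a, 0 < a < d -> xs < g a < 1) ->
  filterlim g (at_right 0) (locally 1).
Proof.
  intros Hclose P [e He].
  destruct (Hclose (1 - e) ltac:(destruct e; simpl; lra)) as [d [Hd Hg]].
  exists (mkposreal d Hd). intros a Ha Hpos. apply He.
  change (Rabs (a - 0) < d) in Ha. change (Rabs (g a - 1) < e).
  apply Rabs_lt_between in Ha. specialize (Hg a ltac:(lra)).
  apply Rabs_lt_between. lra.
Qed.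

Lemma bounded_above_of_nonpos_near_1 (g : R -> R) l r : l <= r ->
  (forall s, l <= s <= r -> continuous g s) -> (forall s, r <= s < 1 -> g s <= 0) ->
  exists B, 0 <= B /\ forall s, l <= s < 1 -> g s <= B.
Proof.
  intros Hlr Hc Hnonpos.
  destruct (continuity_ab_maj g l r Hlr) as [M [HM _]].
  { intros c Hc'. apply continuity_pt_filterlim, Hc, Hc'. }
  exists (Rmax 0 (g M)). split; [apply Rmax_l|]. intros s Hs.
  pose proof (Rmax_l 0 (g M)). pose proof (Rmax_r 0 (g M)).
  destruct (Rle_dec s r); [specialize (HM s ltac:(lra)) | specialize (Hnonpos s ltac:(lra))]; lra.
Qed.

Lemma bounded_below_of_nonincreasing_near_0 (g : R -> R) r x : 0 < r <= x ->
  (forall s, r <= s <= x -> continuous g s) -> (forall s, 0 < s <= r -> g r <= g s) ->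
  exists B, 0 <= B /\ forall s, 0 < s <= x -> - B <= g s.
Proof.
  intros Hrx Hc Hdecr.
  destruct (continuity_ab_min g r x ltac:(lra)) as [M [HM _]].
  { intros c Hc'. apply continuity_pt_filterlim, Hc, Hc'. }
  exists (Rmax 0 (- g M)). split; [apply Rmax_l|]. intros s Hs.
  pose proof (Rmax_r 0 (- g M)). specialize (HM r ltac:(lra)) as HMr.
  destruct (Rle_dec r s); [specialize (HM s ltac:(lra)) | specialize (Hdecr s ltac:(lra))]; lra.
Qed.

(** * Differentiation along a segment *)

Definition segpt (a x m : R) := (1 - m) / 2 * a + (1 + m) / 2 * x.

Lemma segpt_shift a x m : segpt a x m = a + (1 + m) / 2 * (x - a).
Proof. unfold segpt; field. Qed.

Lemma segpt_m1 a x : segpt a x (-1) = a.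
Proof. unfold segpt; field. Qed.

Lemma segpt_in_01 a x m : 0 < a < 1 -> 0 < x < 1 -> -1 <= m <= 1 -> 0 < segpt a x m < 1.
Proof. intros. rewrite segpt_shift. destruct (Rle_dec a x); split; nra. Qed.

Lemma segpt_between a x m : a <= x -> -1 <= m <= 1 -> a <= segpt a x m <= x.
Proof. intros. rewrite segpt_shift. split; nra. Qed.

Lemma segpt_le_mono a x m m' : a <= x -> m <= m' -> segpt a x m <= segpt a x m'.
Proof. intros. rewrite !segpt_shift. nra. Qed.

Lemma segpt_lt_mono a x m m' : a < x -> m < m' -> segpt a x m < segpt a x m'.
Proof. intros. rewrite !segpt_shift. nra. Qed.

Lemma is_derive_segpt_x a x m : is_derive (fun y => segpt a y m) x ((1 + m) / 2).
Proof. unfold segpt. auto_derive; [exact I | ring]. Qed.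

Lemma is_derive_segpt_m a x m : is_derive (segpt a x) m ((x - a) / 2).
Proof. unfold segpt. auto_derive; [exact I | field]. Qed.

Lemma continuity_2d_segpt a x t : continuity_2d_pt (fun u v => segpt a u v) x t.
Proof.
  unfold segpt. apply continuity_2d_pt_plus; apply continuity_2d_pt_mult.
  - apply (continuity_2d_pt_ext (fun u v => (1 - v) * / 2)); [reflexivity|].
    apply continuity_2d_pt_mult, continuity_2d_pt_const.
    apply continuity_2d_pt_minus; [apply continuity_2d_pt_const | apply continuity_2d_pt_id2].
  - apply continuity_2d_pt_const.
  - apply (continuity_2d_pt_ext (fun u v => (1 + v) * / 2)); [reflexivity|].
    apply continuity_2d_pt_mult, continuity_2d_pt_const.
    apply continuity_2d_pt_plus; [apply continuity_2d_pt_const | apply continuity_2d_pt_id2].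
  - apply continuity_2d_pt_id1.
Qed.

Lemma continuous_comp_segpt (g : R -> R) a x m :
  continuous g (segpt a x m) -> continuous (fun m => g (segpt a x m)) m.
Proof.
  intros Hg. apply (continuous_comp (segpt a x) g); [|exact Hg].
  exact (continuous_of_is_derive _ _ _ (is_derive_segpt_m a x m)).
Qed.

Section DerivativeUnderIntegral.

Variables (g g' rho : R -> R) (a : R).
Hypothesis g_derive : forall t, 0 < t < 1 -> is_derive g t (g' t).
Hypothesis g'_cont : forall t, 0 < t < 1 -> continuous g' t.
Hypothesis rho_cont : forall m, continuous rho m.

Lemma is_derive_integrand y m : 0 < segpt a y m < 1 ->
  is_derive (fun z => g (segpt a z m) * rho m) y (g' (segpt a y m) * ((1 + m) / 2 * rho m)).
Proof.
  intros Hy.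
  replace (g' (segpt a y m) * ((1 + m) / 2 * rho m))
    with (((1 + m) / 2 * g' (segpt a y m)) * rho m) by ring.
  apply (is_derive_scal_l (fun z => g (segpt a z m)) y _ (rho m)).
  apply (is_derive_comp g (fun z => segpt a z m)); [apply g_derive, Hy | apply is_derive_segpt_x].
Qed.

Lemma continuous_dsegpt_mul_rho m : continuous (fun v => (1 + v) / 2 * rho v) m.
Proof.
  apply (continuous_mult (fun v => (1 + v) / 2)), rho_cont.
  apply (continuous_of_is_derive _ _ (/ 2)). auto_derive; [exact I | field].
Qed.

Lemma continuity_2d_dintegrand x t : 0 < segpt a x t < 1 ->
  continuity_2d_pt (fun u v => g' (segpt a u v) * ((1 + v) / 2 * rho v)) x t.
Proof.
  intros Ht. apply continuity_2d_pt_mult.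
  - apply (continuity_1d_2d_pt_comp g' (fun u v => segpt a u v)).
    + apply continuity_pt_filterlim, g'_cont, Ht.
    + apply continuity_2d_segpt.
  - apply (continuity_1d_2d_pt_comp (fun v => (1 + v) / 2 * rho v) (fun _ v => v)).
    + apply continuity_pt_filterlim, continuous_dsegpt_mul_rho.
    + apply continuity_2d_pt_id2.
Qed.

Hypothesis a_in : 0 < a < 1.

Lemma is_derive_RInt_segpt x : 0 < x < 1 ->
  is_derive (fun y => RInt (fun m => g (segpt a y m) * rho m) (-1) 1) x
    (RInt (fun m => g' (segpt a x m) * ((1 + m) / 2 * rho m)) (-1) 1).
Proof.
  intros Hx.
  assert (Hloc : locally x (fun y => 0 < y < 1)).
  { apply (open_and (fun y => 0 < y)); [apply open_gt | apply open_lt | exact Hx]. }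
  assert (Hsegpt : forall y m, 0 < y < 1 -> -1 <= m <= 1 -> 0 < segpt a y m < 1)
    by (intros; apply segpt_in_01; assumption).
  rewrite (RInt_ext _ (fun t => Derive (fun u => g (segpt a u t) * rho t) x)).
  2:{ intros m Hm. rewrite Rmin_left, Rmax_right in Hm by lra.
      symmetry; apply is_derive_unique, is_derive_integrand, Hsegpt; lra. }
  apply is_derive_RInt_param_aux; rewrite ?Rmin_left, ?Rmax_right by lra.
  - apply (filter_imp (fun y => 0 < y < 1)); [|exact Hloc].
    intros y Hy t Ht. eexists. apply is_derive_integrand, Hsegpt; assumption.
  - intros t Ht. pose proof (Hsegpt x t Hx Ht) as Hxt.
    assert (Hr : 0 < Rmin (segpt a x t) (1 - segpt a x t)) by (apply Rmin_glb_lt; lra).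
    pose proof (continuity_2d_segpt a x t (mkposreal _ Hr)) as Hnear.
    eapply continuity_2d_pt_ext_loc; [|apply continuity_2d_dintegrand, Hxt].
    eapply locally_2d_impl; [|exact Hnear]. apply locally_2d_forall. intros u v Huv.
    symmetry; apply is_derive_unique, is_derive_integrand.
    apply Rabs_lt_between in Huv. simpl in Huv.
    pose proof (Rmin_l (segpt a x t) (1 - segpt a x t)).
    pose proof (Rmin_r (segpt a x t) (1 - segpt a x t)). lra.
  - apply (filter_imp (fun y => 0 < y < 1)); [|exact Hloc].
    intros y Hy. apply ex_RInt_of_continuous; [lra|]. intros m Hm.
    apply (continuous_mult (fun m => g (segpt a y m))), rho_cont.
    apply continuous_comp_segpt, (continuous_of_is_derive _ _ _ (g_derive _ (Hsegpt y m Hy Hm))).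
  - apply (ex_RInt_ext (fun m => g' (segpt a x m) * ((1 + m) / 2 * rho m))).
    { intros m Hm. rewrite Rmin_left, Rmax_right in Hm by lra.
      symmetry; apply is_derive_unique, is_derive_integrand, Hsegpt; lra. }
    apply ex_RInt_of_continuous; [lra|]. intros m Hm.
    apply (continuous_mult (fun m => g' (segpt a x m))), continuous_dsegpt_mul_rho.
    apply continuous_comp_segpt, g'_cont, Hsegpt; assumption.
Qed.

End DerivativeUnderIntegral.

(** * The moments M_k and the numerator N *)

Definition weight (k : nat) (m : R) := ((1 + m) / 2) ^ k * sqrt (1 - m).

Lemma continuous_weight k m : continuous (weight k) m.
Proof.
  apply (continuous_mult (fun m => ((1 + m) / 2) ^ k)).
  - apply (continuous_of_is_derive _ _ (INR k * / 2 * ((1 + m) / 2) ^ pred k)).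
    auto_derive; [exact I | unfold Rdiv; ring].
  - apply continuous_sqrt_comp, (continuous_of_is_derive _ _ (-1)). auto_derive; [exact I | ring].
Qed.

Lemma weight_succ k m : weight (S k) m = (1 + m) / 2 * weight k m.
Proof. unfold weight. simpl. ring. Qed.

Lemma weight_bounds k m : -1 <= m <= 1 -> 0 <= weight k m <= 2.
Proof.
  intros Hm. induction k as [|k IH].
  - unfold weight. rewrite pow_O, Rmult_1_l. split; [apply sqrt_pos|].
    rewrite <- (sqrt_square 2) by lra. apply sqrt_le_1_alt. lra.
  - rewrite weight_succ. split; nra.
Qed.

Lemma V0_pos x a : 0 < a < 1 -> 0 < x < 1 -> 0 < V0 x a < 1.
Proof. unfold V0; lra. Qed.

Lemma is_derive_V0 x a : is_derive (fun y => V0 y a) x (4 / 15).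
Proof. unfold V0. auto_derive; [exact I | ring]. Qed.

Section Profile.

Variable f : R -> R.
Hypothesis f_smooth : forall n t, 0 < t < 1 -> ex_derive_n f n t.

Lemma is_derive_Derive_n n t : 0 < t < 1 -> is_derive (Derive_n f n) t (Derive_n f (S n) t).
Proof. intros Ht. apply Derive_correct, (f_smooth (S n) t Ht). Qed.

Lemma continuous_Derive_n n t : 0 < t < 1 -> continuous (Derive_n f n) t.
Proof. intros Ht. exact (continuous_of_is_derive _ _ _ (is_derive_Derive_n n t Ht)). Qed.

Lemma continuous_Derive_n_segpt n a x m : 0 < a < 1 -> 0 < x < 1 -> -1 <= m <= 1 ->
  continuous (fun m => Derive_n f n (segpt a x m)) m.
Proof. intros. apply continuous_comp_segpt, continuous_Derive_n, segpt_in_01; assumption. Qed.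

Definition moment (k : nat) (a x : R) : R :=
  RInt (fun m => Derive_n f (S k) (segpt a x m) * weight k m) (-1) 1.

Lemma is_derive_moment k a x : 0 < a < 1 -> 0 < x < 1 ->
  is_derive (moment k a) x (moment (S k) a x).
Proof.
  intros Ha Hx. unfold moment.
  rewrite (RInt_ext _ (fun m => Derive_n f (S (S k)) (segpt a x m) * ((1 + m) / 2 * weight k m)))
    by (intros; rewrite weight_succ; reflexivity).
  apply is_derive_RInt_segpt; auto using is_derive_Derive_n, continuous_Derive_n, continuous_weight.
Qed.

Definition numer (a x : R) : R := V0 x a * moment 1 a x - 4 / 15 * moment 0 a x.

Lemma is_derive_numer a x : 0 < a < 1 -> 0 < x < 1 ->
  is_derive (numer a) x (V0 x a * moment 2 a x).
Proof.
  intros Ha Hx. unfold numer.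
  replace (V0 x a * moment 2 a x)
    with ((4 / 15 * moment 1 a x + V0 x a * moment 2 a x) - 4 / 15 * moment 1 a x) by ring.
  apply (is_derive_minus (fun y => V0 y a * moment 1 a y)).
  - apply (Derive.is_derive_mult (fun y => V0 y a));
      [apply is_derive_V0 | apply is_derive_moment; assumption].
  - apply is_derive_scal, is_derive_moment; assumption.
Qed.

Lemma is_derive_moment0_div_V0 a x : 0 < a < 1 -> 0 < x < 1 ->
  is_derive (fun y => moment 0 a y / V0 y a) x (numer a x / V0 x a ^ 2).
Proof.
  intros Ha Hx. pose proof (V0_pos x a Ha Hx).
  replace (numer a x / V0 x a ^ 2)
    with ((moment 1 a x * V0 x a - moment 0 a x * (4 / 15)) / V0 x a ^ 2) by (unfold numer; field; lra).
  apply (is_derive_div (moment 0 a) (fun y => V0 y a) x (moment 1 a x) (4 / 15));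
    [apply is_derive_moment | apply is_derive_V0 | lra]; assumption.
Qed.

Lemma J0_moment0 x a : J0 f x a = - / (4 * sqrt 2) * (moment 0 a x / V0 x a).
Proof.
  unfold J0, G0, moment, weight.
  rewrite (RInt_ext (fun m => Derive_n f 1 (segpt a x m) * (((1 + m) / 2) ^ 0 * sqrt (1 - m)))
                    (fun mu => Derive f ((1 - mu) / 2 * a + (1 + mu) / 2 * x) * sqrt (1 - mu)))
    by (intros; rewrite pow_O, Rmult_1_l; reflexivity).
  unfold Rdiv. ring.
Qed.

Lemma is_derive_J0 a x : 0 < a < 1 -> 0 < x < 1 ->
  is_derive (fun xi => J0 f xi a) x (- / (4 * sqrt 2) * (numer a x / V0 x a ^ 2)).
Proof.
  intros Ha Hx. apply (is_derive_ext (fun y => - / (4 * sqrt 2) * (moment 0 a y / V0 y a))).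
  - intros y. symmetry. apply J0_moment0.
  - apply is_derive_scal, is_derive_moment0_div_V0; assumption.
Qed.

Lemma J0_critical_iff a x : 0 < a < 1 -> 0 < x < 1 ->
  is_derive (fun xi => J0 f xi a) x 0 <-> numer a x = 0.
Proof.
  intros Ha Hx. pose proof (is_derive_J0 a x Ha Hx) as HJ.
  pose proof (V0_pos x a Ha Hx). assert (0 < sqrt 2) by (apply sqrt_lt_R0; lra).
  split.
  - intros Hcrit. pose proof (is_derive_unique _ _ _ Hcrit) as E.
    rewrite (is_derive_unique _ _ _ HJ) in E.
    replace (numer a x) with (- / (4 * sqrt 2) * (numer a x / V0 x a ^ 2) * (- 4 * sqrt 2 * V0 x a ^ 2))
      by (field; lra).
    rewrite E. ring.
  - intros Nx. rewrite Nx in HJ. replace 0 with (- / (4 * sqrt 2) * (0 / V0 x a ^ 2)) by (field; lra).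
    exact HJ.
Qed.

Hypothesis f'_neg : forall t, 0 < t < 1 -> Derive_n f 1 t < 0.
Hypothesis f_onto : forall y, exists t, 0 < t < 1 /\ f t = y.

Lemma f_decreasing s t : 0 < s < t -> t < 1 -> f t < f s.
Proof.
  intros Hs Ht. apply (lt_of_derive_neg f (Derive_n f 1)); [lra| |].
  - intros x Hx. apply (is_derive_Derive_n 0). lra.
  - intros x Hx. apply f'_neg. lra.
Qed.

Lemma f_large_near_0 M : exists d, 0 < d < 1 /\ forall a, 0 < a <= d -> M < f a.
Proof.
  destruct (f_onto (M + 1)) as [d [Hd Hfd]]. exists d. split; [exact Hd|].
  intros a Ha. destruct (Req_dec a d) as [->|Hne]; [lra|].
  pose proof (f_decreasing a d ltac:(lra) ltac:(lra)). lra.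
Qed.

Lemma f_small_near_1 M : exists d, 0 < d < 1 /\ forall a, d <= a < 1 -> f a < M.
Proof.
  destruct (f_onto (M - 1)) as [d [Hd Hfd]]. exists d. split; [exact Hd|].
  intros a Ha. destruct (Req_dec a d) as [->|Hne]; [lra|].
  pose proof (f_decreasing d a ltac:(lra) ltac:(lra)). lra.
Qed.

Lemma f_unbounded_below_near_1 L s : s < 1 -> ~ (forall u, s <= u < 1 -> L <= f u).
Proof.
  intros Hs Hbound. destruct (f_small_near_1 L) as [d [Hd Hsmall]].
  pose proof (Rmax_l d s). pose proof (Rmax_r d s).
  assert (Rmax d s < 1) by (apply Rmax_lub_lt; lra).
  specialize (Hsmall (Rmax d s) ltac:(lra)). specialize (Hbound (Rmax d s) ltac:(lra)). lra.
Qed.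

Hypothesis f'''_neg_near_0 : exists d, 0 < d /\ forall u, 0 < u < d -> Derive_n f 3 u < 0.
Hypothesis f'''_neg_near_1 : exists d, 0 < d /\ forall u, 1 - d < u < 1 -> Derive_n f 3 u < 0.

Lemma f''_nonpos_near_1 : exists t1, 0 < t1 < 1 /\ forall s, t1 <= s < 1 -> Derive_n f 2 s <= 0.
Proof.
  destruct f'''_neg_near_1 as [d [Hd Hneg3]].
  set (r := Rmax (1 - d) (1 / 2)).
  assert (Hr : 1 - d <= r /\ 1 / 2 <= r < 1).
  { unfold r. split; [apply Rmax_l|]. split; [apply Rmax_r|]. apply Rmax_lub_lt; lra. }
  destruct (classic (exists t, r < t < 1 /\ Derive_n f 2 t <= 0)) as [[t [Ht Ht2]]|Hpos].
  - exists t. split; [lra|]. intros s Hs.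
    apply (Rle_trans _ (Derive_n f 2 t)); [|exact Ht2].
    apply (le_of_derive_nonpos (Derive_n f 2) (Derive_n f 3)); [lra| |].
    + intros; apply is_derive_Derive_n; lra.
    + intros; left; apply Hneg3; lra.
  - (* Otherwise f' increases near 1, which keeps f bounded below there. *)
    exfalso. set (s := (r + 1) / 2).
    assert (Hf'_ge : forall u, s <= u < 1 -> Derive_n f 1 s <= Derive_n f 1 u).
    { intros u Hu. apply (le_of_derive_nonneg (Derive_n f 1) (Derive_n f 2)); [lra| |].
      - intros; apply is_derive_Derive_n; unfold s in *; lra.
      - intros y Hy. apply Rnot_lt_le. intros Hy2. apply Hpos. exists y. unfold s in *. split; lra. }
    pose proof (f'_neg s ltac:(unfold s; lra)).
    apply (f_unbounded_below_near_1 (f s - - Derive_n f 1 s * (1 - s) - 2 * 0 * sqrt (1 - s)) s);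
      [unfold s; lra|].
    apply (bounded_below_of_derive_ge f (Derive_n f 1)); try (unfold s in *; lra).
    + intros u Hu. apply (is_derive_Derive_n 0). unfold s in *; lra.
    + intros u Hu. specialize (Hf'_ge u Hu). unfold Rdiv. rewrite Rmult_0_l. lra.
Qed.

Lemma f''_bounded_above a : 0 < a < 1 ->
  exists B, 0 <= B /\ forall s, a <= s < 1 -> Derive_n f 2 s <= B.
Proof.
  intros Ha. destruct f''_nonpos_near_1 as [t1 [Ht1 Hnonpos]].
  pose proof (Rmax_l a t1). pose proof (Rmax_r a t1).
  assert (Rmax a t1 < 1) by (apply Rmax_lub_lt; lra).
  apply (bounded_above_of_nonpos_near_1 _ a (Rmax a t1)); [lra| |].
  - intros s Hs. apply continuous_Derive_n. lra.
  - intros s Hs. apply Hnonpos. lra.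
Qed.

Lemma f'''_bounded_above l : 0 < l < 1 ->
  exists B, 0 <= B /\ forall s, l <= s < 1 -> Derive_n f 3 s <= B.
Proof.
  intros Hl. destruct f'''_neg_near_1 as [d [Hd Hneg3]].
  set (r := Rmax l (1 - d / 2)).
  assert (Hr : l <= r /\ 1 - d / 2 <= r < 1).
  { unfold r. split; [apply Rmax_l|]. split; [apply Rmax_r|]. apply Rmax_lub_lt; lra. }
  apply (bounded_above_of_nonpos_near_1 _ l r); [lra| |].
  - intros s Hs. apply continuous_Derive_n. lra.
  - intros s Hs. left. apply Hneg3. lra.
Qed.

Lemma f''_bounded_below x : 0 < x < 1 ->
  exists B, 0 <= B /\ forall s, 0 < s <= x -> - B <= Derive_n f 2 s.
Proof.
  intros Hx. destruct f'''_neg_near_0 as [d [Hd Hneg3]].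
  pose proof (Rmin_l (d / 2) x). pose proof (Rmin_r (d / 2) x).
  assert (0 < Rmin (d / 2) x) by (apply Rmin_glb_lt; lra).
  apply (bounded_below_of_nonincreasing_near_0 _ (Rmin (d / 2) x)); [lra| |].
  - intros s Hs. apply continuous_Derive_n. lra.
  - intros s Hs. apply (le_of_derive_nonpos (Derive_n f 2) (Derive_n f 3)); [lra| |].
    + intros; apply is_derive_Derive_n; lra.
    + intros; left; apply Hneg3; lra.
Qed.

Lemma is_derive_Derive_n_segpt n a x m : 0 < segpt a x m < 1 ->
  is_derive (fun m => Derive_n f n (segpt a x m)) m ((x - a) / 2 * Derive_n f (S n) (segpt a x m)).
Proof.
  intros Hm.
  apply (is_derive_comp (Derive_n f n) (segpt a x));
    [apply is_derive_Derive_n, Hm | apply is_derive_segpt_m].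
Qed.

Lemma RInt_Derive_n_segpt n a x p q : 0 < a < 1 -> 0 < x < 1 -> x <> a -> -1 <= p <= q -> q <= 1 ->
  RInt (fun m => Derive_n f (S n) (segpt a x m)) p q
  = 2 / (x - a) * (Derive_n f n (segpt a x q) - Derive_n f n (segpt a x p)).
Proof.
  intros Ha Hx Hxa Hp Hq. rewrite Rmult_minus_distr_l.
  apply is_RInt_unique, (is_RInt_derive (fun m => 2 / (x - a) * Derive_n f n (segpt a x m)));
    intros m Hm; rewrite Rmin_left, Rmax_right in Hm by lra.
  - replace (Derive_n f (S n) (segpt a x m))
      with (2 / (x - a) * ((x - a) / 2 * Derive_n f (S n) (segpt a x m))) by (field; lra).
    apply is_derive_scal, is_derive_Derive_n_segpt, segpt_in_01; lra.
  - apply continuous_Derive_n_segpt; lra.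
Qed.

Lemma ex_RInt_moment_integrand n k a x p q : 0 < a < 1 -> 0 < x < 1 -> -1 <= p <= q -> q <= 1 ->
  ex_RInt (fun m => Derive_n f n (segpt a x m) * weight k m) p q.
Proof.
  intros. apply ex_RInt_of_continuous; [lra|]. intros m Hm.
  apply (continuous_mult (fun m => Derive_n f n (segpt a x m))), continuous_weight.
  apply continuous_Derive_n_segpt; lra.
Qed.

Lemma moment0_le a x : 0 < a -> 2 * a < x < 1 -> moment 0 a x <= 2 * (f (x / 2) - f a).
Proof.
  intros Ha Hx. unfold moment.
  rewrite (RInt_Chasles_R _ (-1) 0 1) by (apply ex_RInt_moment_integrand; lra).
  assert (Hf' : forall m, -1 <= m <= 1 -> Derive_n f 1 (segpt a x m) < 0)
    by (intros; apply f'_neg, segpt_in_01; lra).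
  assert (Hright : RInt (fun m => Derive_n f 1 (segpt a x m) * weight 0 m) 0 1 <= (1 - 0) * 0).
  { apply RInt_le_const; [lra | apply ex_RInt_moment_integrand; lra |].
    intros m Hm. specialize (Hf' m ltac:(lra)). pose proof (weight_bounds 0 m ltac:(lra)). nra. }
  assert (Hleft : RInt (fun m => Derive_n f 1 (segpt a x m) * weight 0 m) (-1) 0
                  <= RInt (fun m => Derive_n f 1 (segpt a x m)) (-1) 0).
  { apply RInt_le; [lra | apply ex_RInt_moment_integrand; lra | |].
    - apply ex_RInt_of_continuous; [lra|]. intros; apply continuous_Derive_n_segpt; lra.
    - intros m Hm. specialize (Hf' m ltac:(lra)).
      assert (1 <= weight 0 m).
      { unfold weight. rewrite pow_O, Rmult_1_l, <- sqrt_1 at 1. apply sqrt_le_1_alt. lra. }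
      nra. }
  rewrite (RInt_Derive_n_segpt 0) in Hleft by lra.
  rewrite segpt_m1 in Hleft.
  replace (segpt a x 0) with ((a + x) / 2) in Hleft by (unfold segpt; field).
  assert (f ((a + x) / 2) <= f (x / 2)).
  { destruct (Req_dec a 0); [lra|]. left; apply f_decreasing; lra. }
  assert (f (x / 2) < f a) by (apply f_decreasing; lra).
  assert (2 <= 2 / (x - a)) by (apply (Rmult_le_reg_r (x - a)); [lra|]; field_simplify; lra).
  change (Derive_n f 0) with f in Hleft.
  assert (2 / (x - a) * (f ((a + x) / 2) - f a) <= 2 * (f (x / 2) - f a)) by nra.
  lra.
Qed.

Lemma moment1_ge a x B : 0 < a < x -> x < 1 -> 0 <= B ->
  (forall s, 0 < s <= x -> - B <= Derive_n f 2 s) -> - 4 * B <= moment 1 a x.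
Proof.
  intros Hax Hx HB Hlow. unfold moment.
  replace (-4 * B) with ((1 - -1) * (- (2 * B))) by ring.
  apply RInt_ge_const; [lra | apply ex_RInt_moment_integrand; lra |].
  intros m Hm. pose proof (weight_bounds 1 m ltac:(lra)).
  pose proof (segpt_between a x m ltac:(lra) ltac:(lra)).
  specialize (Hlow (segpt a x m) ltac:(lra)). nra.
Qed.

Lemma numer_pos_near_0 x : 0 < x < 1 ->
  exists a1, 0 < a1 < 1 /\ forall a, 0 < a < a1 -> 0 < numer a x.
Proof.
  intros Hx. destruct (f''_bounded_below x Hx) as [B [HB Hlow]].
  destruct (f_large_near_0 (f (x / 2) + 8 * B)) as [d [Hd Hlarge]].
  pose proof (Rmin_l d (x / 2)). pose proof (Rmin_r d (x / 2)).
  exists (Rmin d (x / 2)). split; [split; [apply Rmin_glb_lt|]; lra|].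
  intros a Ha. specialize (Hlarge a ltac:(lra)).
  pose proof (moment1_ge a x B ltac:(lra) ltac:(lra) HB Hlow).
  pose proof (moment0_le a x ltac:(lra) ltac:(lra)).
  pose proof (V0_pos x a ltac:(lra) Hx).
  unfold numer. nra.
Qed.

(** * Concavity of N for small u3 *)

(* An antiderivative of m |-> f'''(p(m)) ((1 + m)/2)^2, found by three integrations by parts
   using dp/dm = (x - a)/2. *)
Definition antideriv3 (a x m : R) : R :=
  2 / (x - a) * ((1 + m) / 2) ^ 2 * Derive_n f 2 (segpt a x m)
  - 4 / (x - a) ^ 2 * ((1 + m) / 2) * Derive_n f 1 (segpt a x m)
  + 4 / (x - a) ^ 3 * Derive_n f 0 (segpt a x m).

Lemma is_derive_antideriv3 a x m : x <> a -> 0 < segpt a x m < 1 ->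
  is_derive (antideriv3 a x) m (Derive_n f 3 (segpt a x m) * ((1 + m) / 2) ^ 2).
Proof.
  intros Hxa Hm.
  replace (Derive_n f 3 (segpt a x m) * ((1 + m) / 2) ^ 2) with
    ((2 / (x - a) * (2 * ((1 + m) / 2) * / 2)) * Derive_n f 2 (segpt a x m)
       + 2 / (x - a) * ((1 + m) / 2) ^ 2 * ((x - a) / 2 * Derive_n f 3 (segpt a x m))
     - ((4 / (x - a) ^ 2 * / 2) * Derive_n f 1 (segpt a x m)
       + 4 / (x - a) ^ 2 * ((1 + m) / 2) * ((x - a) / 2 * Derive_n f 2 (segpt a x m)))
     + 4 / (x - a) ^ 3 * ((x - a) / 2 * Derive_n f 1 (segpt a x m)))
    by (field; lra).
  assert (Hsq : is_derive (fun m => 2 / (x - a) * ((1 + m) / 2) ^ 2) m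
                          (2 / (x - a) * (2 * ((1 + m) / 2) * / 2)))
    by (auto_derive; [exact I | field; lra]).
  assert (Hlin : is_derive (fun m => 4 / (x - a) ^ 2 * ((1 + m) / 2)) m (4 / (x - a) ^ 2 * / 2))
    by (auto_derive; [exact I | field; lra]).
  unfold antideriv3.
  apply (is_derive_plus (K := R_AbsRing) (V := R_NormedModule));
    [apply (is_derive_minus (K := R_AbsRing) (V := R_NormedModule)) | apply is_derive_scal].
  - exact (Derive.is_derive_mult _ _ _ _ _ Hsq (is_derive_Derive_n_segpt 2 a x m Hm)).
  - exact (Derive.is_derive_mult _ _ _ _ _ Hlin (is_derive_Derive_n_segpt 1 a x m Hm)).
  - exact (is_derive_Derive_n_segpt 0 a x m Hm).
Qed.

Lemma RInt_Derive3_segpt_sq a x q : 0 < a < 1 -> 0 < x < 1 -> x <> a -> -1 <= q <= 1 ->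
  RInt (fun m => Derive_n f 3 (segpt a x m) * ((1 + m) / 2) ^ 2) (-1) q
  = antideriv3 a x q - 4 / (x - a) ^ 3 * f a.
Proof.
  intros Ha Hx Hxa Hq.
  replace (4 / (x - a) ^ 3 * f a) with (antideriv3 a x (-1))
    by (unfold antideriv3; rewrite segpt_m1; simpl; field; lra).
  apply is_RInt_unique, (is_RInt_derive (antideriv3 a x));
    intros m Hm; rewrite Rmin_left, Rmax_right in Hm by lra.
  - apply is_derive_antideriv3, segpt_in_01; lra.
  - apply (continuous_mult (fun m => Derive_n f 3 (segpt a x m))).
    + apply continuous_Derive_n_segpt; lra.
    + apply (continuous_of_is_derive _ _ (2 * ((1 + m) / 2) * / 2)). auto_derive; [exact I | field].
Qed.

Lemma antideriv3_bounded l : 0 < l -> exists C, forall a x q, 0 < a -> l <= x - a <= 1 ->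
  -1 <= q <= 1 -> segpt a x q = l -> antideriv3 a x q <= C.
Proof.
  intros Hl.
  exists (2 * / l * Rabs (Derive_n f 2 l) + 4 * (/ l) ^ 2 * Rabs (Derive_n f 1 l)
          + 4 * (/ l) ^ 3 * Rabs (f l)).
  intros a x q Ha Hh Hq Hl'. unfold antideriv3. rewrite Hl'.
  set (w := (1 + q) / 2). assert (Hw : 0 <= w <= 1) by (unfold w; lra).
  assert (Hinv : 0 < / (x - a) <= / l)
    by (split; [apply Rinv_0_lt_compat | apply Rinv_le_contravar]; lra).
  replace (2 / (x - a) * w ^ 2) with (2 * / (x - a) * w ^ 2) by (unfold Rdiv; ring).
  replace (4 / (x - a) ^ 2 * w) with (4 * (/ (x - a)) ^ 2 * w) by (field; lra).
  replace (4 / (x - a) ^ 3) with (4 * (/ (x - a)) ^ 3) by (field; lra).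
  set (ih := / (x - a)) in *.
  assert (H2 : ih ^ 2 <= (/ l) ^ 2) by (apply pow_incr; lra).
  assert (H3 : ih ^ 3 <= (/ l) ^ 3) by (apply pow_incr; lra).
  assert (Hw2 : 0 <= w ^ 2 <= 1) by (simpl; split; nra).
  assert (0 <= ih ^ 2) by (apply pow_le; lra).
  assert (0 <= ih ^ 3) by (apply pow_le; lra).
  assert (B2 : 0 <= 2 * ih * w ^ 2 <= 2 * / l) by (split; nra).
  assert (B1 : 0 <= 4 * ih ^ 2 * w <= 4 * (/ l) ^ 2) by (split; nra).
  assert (B0 : 0 <= 4 * ih ^ 3 <= 4 * (/ l) ^ 3) by (split; nra).
  pose proof (Rle_abs (Derive_n f 2 l)). pose proof (Rle_abs (- Derive_n f 1 l)).
  pose proof (Rle_abs (f l)). rewrite Rabs_Ropp in *. simpl Derive_n at 3.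
  pose proof (Rabs_pos (Derive_n f 2 l)). pose proof (Rabs_pos (Derive_n f 1 l)).
  pose proof (Rabs_pos (f l)). nra.
Qed.

Lemma RInt_moment2_low_le a x q d : 0 < a < 1 -> a < x < 1 -> -1 <= q <= 1 -> 0 < d <= 1 - q ->
  (forall m, -1 < m < q -> Derive_n f 3 (segpt a x m) <= 0) ->
  RInt (fun m => Derive_n f 3 (segpt a x m) * weight 2 m) (-1) q
    <= sqrt d * (antideriv3 a x q - 4 / (x - a) ^ 3 * f a).
Proof.
  intros Ha Hx Hq Hd Hneg.
  set (G := fun m => Derive_n f 3 (segpt a x m) * ((1 + m) / 2) ^ 2).
  assert (HcG : forall m, -1 <= m <= q -> continuous G m).
  { intros m Hm.
    apply (continuous_mult (fun m => Derive_n f 3 (segpt a x m)));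
      [apply continuous_Derive_n_segpt; lra|].
    apply (continuous_of_is_derive _ _ (2 * ((1 + m) / 2) * / 2)). auto_derive; [exact I | field]. }
  assert (HexG : ex_RInt G (-1) q) by (apply ex_RInt_of_continuous; [lra | exact HcG]).
  assert (HG : RInt G (-1) q <= (q - -1) * 0).
  { apply RInt_le_const; [lra | exact HexG |]. intros m Hm. unfold G.
    specialize (Hneg m Hm). pose proof (pow2_ge_0 ((1 + m) / 2)). nra. }
  assert (Hlow : RInt (fun m => Derive_n f 3 (segpt a x m) * weight 2 m) (-1) q
                 <= RInt (fun m => sqrt (1 - q) * G m) (-1) q).
  { apply RInt_le; [lra | apply ex_RInt_moment_integrand; lra | |].
    - apply ex_RInt_of_continuous; [lra|]. intros m Hm.
      apply (continuous_mult (fun _ => sqrt (1 - q))); [apply continuous_const|].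
      apply HcG, Hm.
    - intros m Hm. unfold G, weight. specialize (Hneg m Hm).
      assert (sqrt (1 - q) <= sqrt (1 - m)) by (apply sqrt_le_1_alt; lra).
      pose proof (pow2_ge_0 ((1 + m) / 2)).
      assert (Derive_n f 3 (segpt a x m) * ((1 + m) / 2) ^ 2 <= 0) by nra. nra. }
  replace (RInt (fun m => sqrt (1 - q) * G m) (-1) q) with (sqrt (1 - q) * RInt G (-1) q) in Hlow
    by (symmetry; exact (RInt_scal (V := R_CompleteNormedModule) G (-1) q (sqrt (1 - q)) HexG)).
  unfold G in *. rewrite RInt_Derive3_segpt_sq in * by lra.
  assert (sqrt d <= sqrt (1 - q)) by (apply sqrt_le_1_alt; lra).
  pose proof (sqrt_pos d). nra.
Qed.

Section Concavity.

Variables (d B3 C : R).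
Hypothesis d_in : 0 < d <= 1 / 2.
Hypothesis f'''_neg_below_d : forall u, 0 < u < d -> Derive_n f 3 u < 0.
Hypothesis B3_nonneg : 0 <= B3.
Hypothesis f'''_le_B3 : forall s, d / 2 <= s < 1 -> Derive_n f 3 s <= B3.
Hypothesis antideriv3_le_C : forall a x q, 0 < a -> d / 2 <= x - a <= 1 -> -1 <= q <= 1 ->
  segpt a x q = d / 2 -> antideriv3 a x q <= C.

Lemma moment2_neg_near_0 a x : 0 < a < d -> 0 < x < d -> moment 2 a x < 0.
Proof.
  intros Ha Hx. unfold moment.
  replace 0 with (RInt (fun _ => 0) (-1) 1) by (rewrite RInt_const; exact (Rmult_0_r _)).
  apply RInt_lt; [lra | intros; apply continuous_const | |].
  - intros m Hm. apply (continuous_mult (fun m => Derive_n f 3 (segpt a x m))), continuous_weight.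
    apply continuous_Derive_n_segpt; lra.
  - intros m Hm. assert (Hlt : 0 < segpt a x m < d).
    { split; [apply segpt_in_01; lra|]. unfold segpt. nra. }
    specialize (f'''_neg_below_d _ Hlt). unfold weight.
    assert (0 < ((1 + m) / 2) ^ 2 * sqrt (1 - m))
      by (apply Rmult_lt_0_compat; [apply pow_lt | apply sqrt_lt_R0]; lra).
    nra.
Qed.

(* Split at q with p(q) = d/2: to the right f''' <= B3; to the left f''' < 0 and
   sqrt(1 - m) >= sqrt d, so the integration by parts applies. *)
Lemma moment2_le_far a x : 0 < a < d / 4 -> 0 <= f a -> d <= x < 1 ->
  moment 2 a x <= sqrt d * (C - 4 * f a) + 4 * B3.
Proof.
  intros Ha Hfa Hx.
  set (w := (d / 2 - a) / (x - a)). set (q := 2 * w - 1).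
  assert (Hw_eq : w * (x - a) = d / 2 - a) by (unfold w; field; lra).
  assert (Hw : 0 < w <= 1 - d / 2).
  { split; [unfold w; apply Rdiv_lt_0_compat; lra|].
    assert ((1 - d / 2 - w) * (x - a) >= 0) by nra. nra. }
  assert (Hq : segpt a x q = d / 2) by (rewrite segpt_shift; unfold q; lra).
  unfold moment. rewrite (RInt_Chasles_R _ (-1) q 1) by (apply ex_RInt_moment_integrand; unfold q; lra).
  assert (Hhigh : RInt (fun m => Derive_n f 3 (segpt a x m) * weight 2 m) q 1 <= (1 - q) * (2 * B3)).
  { apply RInt_le_const; [unfold q; lra | apply ex_RInt_moment_integrand; unfold q; lra |].
    intros m Hm. pose proof (weight_bounds 2 m ltac:(unfold q in *; lra)).
    pose proof (segpt_le_mono a x q m ltac:(lra) ltac:(lra)).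
    pose proof (segpt_in_01 a x m ltac:(lra) ltac:(lra) ltac:(unfold q in *; lra)).
    specialize (f'''_le_B3 (segpt a x m) ltac:(lra)). nra. }
  assert (Hlow := RInt_moment2_low_le a x q d ltac:(lra) ltac:(lra) ltac:(unfold q; lra)
                    ltac:(unfold q; lra)).
  specialize (antideriv3_le_C a x q ltac:(lra) ltac:(lra) ltac:(unfold q; lra) Hq).
  assert (4 * f a <= 4 / (x - a) ^ 3 * f a).
  { assert (1 <= / (x - a) ^ 3).
    { rewrite <- Rinv_1 at 1. apply Rinv_le_contravar; [apply pow_lt; lra|].
      rewrite <- (pow1 3). apply pow_incr. lra. }
    unfold Rdiv. nra. }
  pose proof (sqrt_pos d). 
  assert (RInt (fun m => Derive_n f 3 (segpt a x m) * weight 2 m) (-1) q <= sqrt d * (C - 4 * f a)).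
  { eapply Rle_trans; [apply Hlow|]. 
    - intros m Hm. apply Rlt_le, f'''_neg_below_d. split; [apply segpt_in_01; unfold q in *; lra|].
      pose proof (segpt_lt_mono a x m q ltac:(lra) ltac:(lra)). lra.
    - apply Rmult_le_compat_l; lra. }
  unfold q in *. nra.
Qed.

End Concavity.

Lemma moment2_neg : exists a0, 0 < a0 < 1 /\ forall a x, 0 < a < a0 -> 0 < x < 1 -> moment 2 a x < 0.
Proof.
  destruct f'''_neg_near_0 as [d0 [Hd0 Hneg]].
  set (d := Rmin d0 (1 / 2)).
  assert (Hd : 0 < d <= 1 / 2 /\ d <= d0)
    by (unfold d; split; [split; [apply Rmin_glb_lt | apply Rmin_r] | apply Rmin_l]; lra).
  assert (Hneg_d : forall u, 0 < u < d -> Derive_n f 3 u < 0) by (intros; apply Hneg; lra).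
  destruct (f'''_bounded_above (d / 2) ltac:(lra)) as [B3 [HB3 HB3le]].
  destruct (antideriv3_bounded (d / 2) ltac:(lra)) as [C HC].
  assert (Hsd : 0 < sqrt d) by (apply sqrt_lt_R0; lra).
  destruct (f_large_near_0 (Rmax 0 (C / 4 + B3 / sqrt d))) as [dM [HdM Hlarge]].
  pose proof (Rmax_l 0 (C / 4 + B3 / sqrt d)). pose proof (Rmax_r 0 (C / 4 + B3 / sqrt d)).
  pose proof (Rmin_l dM (d / 4)). pose proof (Rmin_r dM (d / 4)).
  exists (Rmin dM (d / 4)). split; [split; [apply Rmin_glb_lt|]; lra|].
  intros a x Ha Hx. specialize (Hlarge a ltac:(lra)).
  destruct (Rlt_le_dec x d) as [Hxd|Hxd].
  - apply (moment2_neg_near_0 d ltac:(lra) Hneg_d); lra.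
  - pose proof (moment2_le_far d B3 C ltac:(lra) Hneg_d HB3 HB3le HC a x
                  ltac:(lra) ltac:(lra) ltac:(lra)).
    assert (sqrt d * (C / 4 + B3 / sqrt d) = sqrt d * C / 4 + B3) by (field; lra).
    nra.
Qed.

(** * Sign change of N *)

Lemma moment1_ge_of_numer_nonneg a x0 : 0 < a < 1 -> 0 < x0 < 1 ->
  (forall x, x0 <= x < 1 -> 0 <= numer a x) ->
  forall x, x0 <= x < 1 -> 4 / 15 * (moment 0 a x0 / V0 x0 a) <= moment 1 a x.
Proof.
  intros Ha Hx0 Hnum x Hx.
  assert (Hratio : moment 0 a x0 / V0 x0 a <= moment 0 a x / V0 x a).
  { apply (le_of_derive_nonneg (fun y => moment 0 a y / V0 y a) (fun y => numer a y / V0 y a ^ 2));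
      [lra| |].
    - intros y Hy. apply is_derive_moment0_div_V0; lra.
    - intros y Hy. pose proof (V0_pos y a Ha ltac:(lra)).
      apply Rdiv_le_0_compat; [apply Hnum; lra | nra]. }
  pose proof (V0_pos x a Ha ltac:(lra)). specialize (Hnum x Hx). unfold numer in Hnum.
  assert (moment 0 a x / V0 x a * V0 x a = moment 0 a x) by (field; lra).
  apply (Rmult_le_reg_r (V0 x a)); [lra|]. nra.
Qed.

Lemma moment1_le_split a x m1 mu B : 0 < a < x -> x < 1 -> -1 <= m1 <= mu -> mu <= 1 ->
  (forall s, a <= s < 1 -> Derive_n f 2 s <= B) -> 0 <= B ->
  (forall s, segpt a x m1 <= s < 1 -> Derive_n f 2 s <= 0) ->
  moment 1 a x <= 4 * B + (1 + m1) / 2 * sqrt (1 - mu)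
                   * (2 / (x - a) * (Derive_n f 1 (segpt a x mu) - Derive_n f 1 (segpt a x m1))).
Proof.
  intros Hax Hx Hm1 Hmu HB HB0 Hnonpos.
  set (G := fun m => Derive_n f 2 (segpt a x m)).
  set (c := (1 + m1) / 2 * sqrt (1 - mu)).
  assert (Hc : 0 <= c) by (apply Rmult_le_pos; [lra | apply sqrt_pos]).
  assert (Hex : forall p q, -1 <= p <= q -> q <= 1 -> ex_RInt (fun m => G m * weight 1 m) p q)
    by (intros; apply ex_RInt_moment_integrand; lra).
  assert (HexG : ex_RInt G m1 mu)
    by (apply ex_RInt_of_continuous; [lra|]; intros; apply continuous_Derive_n_segpt; lra).
  unfold moment. rewrite (RInt_Chasles_R _ (-1) m1 1), (RInt_Chasles_R _ m1 mu 1) by (apply Hex; lra).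
  assert (Hfirst : RInt (fun m => G m * weight 1 m) (-1) m1 <= (m1 - -1) * (2 * B)).
  { apply RInt_le_const; [lra | apply Hex; lra |]. intros m Hm.
    pose proof (weight_bounds 1 m ltac:(lra)). pose proof (segpt_between a x m ltac:(lra) ltac:(lra)).
    pose proof (segpt_in_01 a x m ltac:(lra) ltac:(lra) ltac:(lra)).
    specialize (HB (segpt a x m) ltac:(lra)). unfold G. nra. }
  assert (Hmid : RInt (fun m => G m * weight 1 m) m1 mu <= RInt (fun m => c * G m) m1 mu).
  { apply RInt_le; [lra | apply Hex; lra | exact (ex_RInt_scal (V := R_CompleteNormedModule) _ _ _ c HexG) |].
    intros m Hm.
    pose proof (segpt_le_mono a x m1 m ltac:(lra) ltac:(lra)).
    pose proof (segpt_in_01 a x m ltac:(lra) ltac:(lra) ltac:(lra)).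
    specialize (Hnonpos (segpt a x m) ltac:(lra)).
    assert (c <= weight 1 m).
    { unfold c, weight. rewrite pow_1. apply Rmult_le_compat; try lra; [apply sqrt_pos|].
      apply sqrt_le_1_alt. lra. }
    unfold G. nra. }
  assert (Hlast : RInt (fun m => G m * weight 1 m) mu 1 <= (1 - mu) * 0).
  { apply RInt_le_const; [lra | apply Hex; lra |]. intros m Hm.
    pose proof (weight_bounds 1 m ltac:(lra)). pose proof (segpt_le_mono a x m1 m ltac:(lra) ltac:(lra)).
    pose proof (segpt_in_01 a x m ltac:(lra) ltac:(lra) ltac:(lra)).
    specialize (Hnonpos (segpt a x m) ltac:(lra)). unfold G. nra. }
  replace (RInt (fun m => c * G m) m1 mu) with (c * RInt G m1 mu) in Hmid
    by (symmetry; exact (RInt_scal (V := R_CompleteNormedModule) G m1 mu c HexG)).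
  unfold G in Hmid. rewrite (RInt_Derive_n_segpt 1) in Hmid by lra.
  fold c. unfold G in *. assert ((m1 - -1) * (2 * B) <= 4 * B) by nra. lra.
Qed.

Section DeriveBelowNear1.

Variables (a x1 w1 L B K : R).
Hypothesis a_in : 0 < a < 1.
Hypothesis w1_in : 0 < w1 < 1.
Hypothesis x1_in : a < x1 < 1.
Hypothesis moment1_ge_L : forall x, x1 <= x < 1 -> L <= moment 1 a x.
Hypothesis B_nonneg : 0 <= B.
Hypothesis f''_le_B : forall s, a <= s < 1 -> Derive_n f 2 s <= B.
Hypothesis f''_nonpos : forall s, w1 * x1 <= s < 1 -> Derive_n f 2 s <= 0.
Hypothesis f'_ge_K : forall s, w1 * x1 <= s <= (1 - w1) * a + w1 -> - K <= Derive_n f 1 s.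

(* Take xi = (1 + u)/2 and split M_1(a, xi) at the parameters where p = a + w1 (xi - a) and
   p = u: in between f'' <= 0 and the weight is at least w1 sqrt(1 - u), so the integral of f''
   there, f'(u) - f'(a + w1 (xi - a)), cannot be very negative. *)
Lemma f'_ge_near_1 u : 2 * x1 - 1 <= u < 1 -> (1 - w1) * a + w1 / 2 <= u * (1 - w1 / 2) ->
  - K - Rmax 0 (4 * B - L) / (2 * w1) / sqrt (1 - u) <= Derive_n f 1 u.
Proof.
  intros Hu Hw1u.
  set (x := (1 + u) / 2). set (v := (u - a) / (x - a)).
  assert (Hx : x1 <= x < 1 /\ a < x /\ u < x) by (unfold x; lra).
  assert (Hv_eq : v * (x - a) = u - a) by (unfold v; field; lra).
  assert (Hv : w1 <= v <= 1).
  { split; [assert ((v - w1) * (x - a) >= 0) by (unfold x in *; nra)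
           | assert ((1 - v) * (x - a) >= 0) by lra]; nra. }
  assert (Hmu : segpt a x (2 * v - 1) = u) by (rewrite segpt_shift; lra).
  assert (Hm1 : segpt a x (2 * w1 - 1) = a + w1 * (x - a)) by (rewrite segpt_shift; field).
  assert (Hp1 : w1 * x1 <= a + w1 * (x - a) <= (1 - w1) * a + w1) by nra.
  pose proof (moment1_ge_L x ltac:(lra)) as HL.
  pose proof (moment1_le_split a x (2 * w1 - 1) (2 * v - 1) B ltac:(lra) ltac:(lra) ltac:(lra) ltac:(lra)
                f''_le_B B_nonneg ltac:(rewrite Hm1; intros; apply f''_nonpos; lra)) as Hsplit.
  rewrite Hmu, Hm1 in Hsplit.
  replace ((1 + (2 * w1 - 1)) / 2) with w1 in Hsplit by field.
  specialize (f'_ge_K (a + w1 * (x - a)) Hp1).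
  set (D := Derive_n f 1 u - Derive_n f 1 (a + w1 * (x - a))) in Hsplit.
  assert (Hsu : 0 < sqrt (1 - u)) by (apply sqrt_lt_R0; lra).
  pose proof (Rmax_l 0 (4 * B - L)). pose proof (Rmax_r 0 (4 * B - L)).
  assert (0 <= Rmax 0 (4 * B - L) / (2 * w1) / sqrt (1 - u))
    by (repeat apply Rdiv_le_0_compat; lra).
  destruct (Rle_or_lt 0 D) as [HD|HD]; [unfold D in *; lra|].
  assert (Hsq : sqrt (1 - u) <= sqrt (1 - (2 * v - 1))).
  { apply sqrt_le_1_alt. assert (2 * x = 1 + u) by (unfold x; field).
    assert (0 <= (1 - v) * (1 - (x - a))) by (apply Rmult_le_pos; lra). nra. }
  assert (H2 : 2 <= 2 / (x - a)) by (apply (Rmult_le_reg_r (x - a)); [lra|]; field_simplify; lra).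
  assert (Hcoef : 2 * w1 * sqrt (1 - u) <= w1 * sqrt (1 - (2 * v - 1)) * (2 / (x - a))).
  { replace (2 * w1 * sqrt (1 - u)) with (w1 * sqrt (1 - u) * 2) by ring.
    apply Rmult_le_compat; try lra; [apply Rmult_le_pos; lra | apply Rmult_le_compat_l; lra]. }
  assert (w1 * sqrt (1 - (2 * v - 1)) * (2 / (x - a) * D) <= 2 * w1 * sqrt (1 - u) * D)
    by (rewrite <- Rmult_assoc, (Rmult_comm _ D), (Rmult_comm _ D); apply Rmult_le_compat_neg_l; lra).
  assert (HDu : - Rmax 0 (4 * B - L) <= 2 * w1 * sqrt (1 - u) * D) by lra.
  assert (HCS : Rmax 0 (4 * B - L) / (2 * w1) / sqrt (1 - u) * (2 * w1 * sqrt (1 - u))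
                = Rmax 0 (4 * B - L)) by (field; lra).
  assert (- (Rmax 0 (4 * B - L) / (2 * w1) / sqrt (1 - u)) <= D).
  { apply (Rmult_le_reg_r (2 * w1 * sqrt (1 - u))); [nra|].
    rewrite Ropp_mult_distr_l_reverse, HCS. lra. }
  unfold D in *. lra.
Qed.

End DeriveBelowNear1.

Lemma f'_bounded_below l r : 0 < l <= r -> r < 1 ->
  exists K, 0 <= K /\ forall s, l <= s <= r -> - K <= Derive_n f 1 s.
Proof.
  intros Hl Hr. destruct (continuity_ab_min (Derive_n f 1) l r ltac:(lra)) as [m [Hm Hmlr]].
  { intros c Hc. apply continuity_pt_filterlim, continuous_Derive_n. lra. }
  exists (- Derive_n f 1 m). split; [pose proof (f'_neg m ltac:(lra)); lra|].
  intros s Hs. specialize (Hm s Hs). lra.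
Qed.

Lemma numer_neg_somewhere a : 0 < a < 1 -> exists x, 0 < x < 1 /\ numer a x < 0.
Proof.
  intros Ha. apply NNPP. intros Hno.
  assert (Hnum : forall x, 0 < x < 1 -> 0 <= numer a x)
    by (intros x Hx; apply Rnot_lt_le; intros Hneg; apply Hno; exists x; split; assumption).
  destruct f''_nonpos_near_1 as [t1 [Ht1 Hnonpos]].
  set (w1 := (1 + t1) / 2).
  assert (Hw1 : t1 < w1 < 1 /\ t1 <= w1 * w1) by (unfold w1; split; [lra | nra]).
  set (x1 := Rmax w1 ((1 + a) / 2)).
  assert (Hx1 : w1 <= x1 /\ (1 + a) / 2 <= x1 < 1)
    by (unfold x1; split; [apply Rmax_l | split; [apply Rmax_r | apply Rmax_lub_lt; lra]]).
  assert (Hw1x1 : t1 <= w1 * x1 < (1 - w1) * a + w1) by (split; nra).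
  destruct (f''_bounded_above a Ha) as [B [HB HBle]].
  destruct (f'_bounded_below (w1 * x1) ((1 - w1) * a + w1)) as [K [HK HKle]]; [nra | nra |].
  set (L := 4 / 15 * (moment 0 a x1 / V0 x1 a)).
  set (C := Rmax 0 (4 * B - L) / (2 * w1)).
  assert (HC : 0 <= C) by (unfold C; apply Rdiv_le_0_compat; [apply Rmax_l | lra]).
  set (s := Rmax (2 * x1 - 1) (((1 - w1) * a + w1 / 2) / (1 - w1 / 2))).
  assert (Hs : 2 * x1 - 1 <= s /\ ((1 - w1) * a + w1 / 2) / (1 - w1 / 2) <= s < 1).
  { unfold s. split; [apply Rmax_l | split; [apply Rmax_r | apply Rmax_lub_lt; [lra|]]].
    apply (Rmult_lt_reg_r (1 - w1 / 2)); [lra|]. field_simplify; nra. }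
  apply (f_unbounded_below_near_1 (f s - K * (1 - s) - 2 * C * sqrt (1 - s)) s); [lra|].
  apply (bounded_below_of_derive_ge f (Derive_n f 1)); try lra.
  - intros u Hu. apply (is_derive_Derive_n 0). lra.
  - intros u Hu.
    apply (f'_ge_near_1 a x1 w1 L B K);
      [lra | lra | lra | | exact HB | exact HBle | | exact HKle | lra |].
    + intros x Hx. apply moment1_ge_of_numer_nonneg; try lra. intros; apply Hnum; lra.
    + intros; apply Hnonpos; lra.
    + assert (Hq : ((1 - w1) * a + w1 / 2) / (1 - w1 / 2) * (1 - w1 / 2) = (1 - w1) * a + w1 / 2)
        by (field; lra).
      assert (0 < 1 - w1 / 2) by lra. nra.
Qed.

Section ConcaveRegime.

Variable a : R.
Hypothesis a_in : 0 < a < 1.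
Hypothesis moment2_neg_at_a : forall x, 0 < x < 1 -> moment 2 a x < 0.

Lemma numer_decreasing p q : 0 < p < q -> q < 1 -> numer a q < numer a p.
Proof.
  intros Hp Hq. apply (lt_of_derive_neg (numer a) (fun x => V0 x a * moment 2 a x)); [lra| |].
  - intros x Hx. apply is_derive_numer; lra.
  - intros x Hx. pose proof (V0_pos x a a_in ltac:(lra)).
    pose proof (moment2_neg_at_a x ltac:(lra)). nra.
Qed.

Lemma numer_root_unique y z : 0 < y < 1 -> 0 < z < 1 -> numer a y = 0 -> numer a z = 0 -> y = z.
Proof.
  intros Hy Hz Ny Nz. destruct (Rtotal_order y z) as [Hlt|[Heq|Hgt]]; [|exact Heq|].
  - pose proof (numer_decreasing y z ltac:(lra) ltac:(lra)). lra.
  - pose proof (numer_decreasing z y ltac:(lra) ltac:(lra)). lra.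
Qed.

Lemma J0_strict_argmin z : 0 < z < 1 -> numer a z = 0 ->
  forall y, 0 < y < 1 -> y <> z -> J0 f z a < J0 f y a.
Proof.
  intros Hz Nz.
  assert (Hc : 0 < / (4 * sqrt 2)) by (apply Rinv_0_lt_compat; pose proof (sqrt_lt_R0 2); lra).
  apply (strict_argmin_of_derive_sign (fun xi => J0 f xi a)
           (fun x => - / (4 * sqrt 2) * (numer a x / V0 x a ^ 2)) 0 1 z); [lra | | | |].
  - intros x Hx. apply is_derive_J0; lra.
  - rewrite Nz. unfold Rdiv. ring.
  - intros x Hx. pose proof (numer_decreasing x z ltac:(lra) ltac:(lra)).
    pose proof (V0_pos x a a_in ltac:(lra)).
    assert (0 < numer a x / V0 x a ^ 2) by (apply Rdiv_lt_0_compat; nra). nra.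
  - intros x Hx. pose proof (numer_decreasing z x ltac:(lra) ltac:(lra)).
    pose proof (V0_pos x a a_in ltac:(lra)).
    assert (numer a x / V0 x a ^ 2 < 0)
      by (unfold Rdiv; apply Rmult_neg_pos; [lra | apply Rinv_0_lt_compat; nra]).
    nra.
Qed.

Lemma J0_unique_critical_minimizer z : 0 < z < 1 -> numer a z = 0 ->
  (0 < z < 1 /\ is_derive (fun xi => J0 f xi a) z 0) /\
  (forall y, 0 < y < 1 -> is_derive (fun xi => J0 f xi a) y 0 -> y = z) /\
  (forall y, 0 < y < 1 -> J0 f z a <= J0 f y a) /\
  (forall y, 0 < y < 1 -> (forall w, 0 < w < 1 -> J0 f y a <= J0 f w a) -> y = z).
Proof.
  intros Hz Nz. pose proof (J0_strict_argmin z Hz Nz) as Hmin.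
  split; [|split; [|split]].
  - split; [exact Hz | apply J0_critical_iff; assumption].
  - intros y Hy Hcrit. apply numer_root_unique; try assumption.
    apply (J0_critical_iff a y a_in Hy), Hcrit.
  - intros y Hy. destruct (Req_dec y z) as [->|Hne]; [lra | left; apply Hmin; assumption].
  - intros y Hy Hymin. apply NNPP. intros Hne.
    specialize (Hmin y Hy Hne). specialize (Hymin z Hz). lra.
Qed.

End ConcaveRegime.

Lemma numer_has_root_for_small_a : exists eps, 0 < eps <= 1 /\ forall a, 0 < a < eps ->
  (forall x, 0 < x < 1 -> moment 2 a x < 0) /\ exists z, 0 < z < 1 /\ numer a z = 0.
Proof.
  destruct moment2_neg as [a0 [Ha0 Hconc]].
  destruct (numer_pos_near_0 (1 / 2) ltac:(lra)) as [a1 [Ha1 Hpos]].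
  pose proof (Rmin_l a0 a1). pose proof (Rmin_r a0 a1).
  exists (Rmin a0 a1). split; [split; [apply Rmin_glb_lt|]; lra|].
  intros a Ha. assert (Hc : forall x, 0 < x < 1 -> moment 2 a x < 0) by (intros; apply Hconc; lra).
  split; [exact Hc|].
  destruct (numer_neg_somewhere a ltac:(lra)) as [xb [Hxb Nxb]].
  pose proof (Hpos a ltac:(lra)) as N12.
  assert (Hxb2 : 1 / 2 < xb).
  { destruct (Rlt_le_dec (1 / 2) xb) as [|Hle]; [assumption|].
    destruct (Req_dec xb (1 / 2)) as [->|]; [lra|].
    pose proof (numer_decreasing a ltac:(lra) Hc xb (1 / 2) ltac:(lra) ltac:(lra)). lra. }
  destruct (IVT_interv (fun y => - numer a y) (1 / 2) xb) as [z [Hz Nz]]; try lra.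
  - intros y Hy. apply continuity_pt_opp, continuity_pt_filterlim.
    exact (continuous_of_is_derive _ _ _ (is_derive_numer a y ltac:(lra) ltac:(lra))).
  - exists z. split; lra.
Qed.

Lemma numer_roots_tend_to_1 eps (z : R -> R) : 0 < eps -> (forall a, 0 < a < eps ->
  (forall x, 0 < x < 1 -> moment 2 a x < 0) /\ 0 < z a < 1 /\ numer a (z a) = 0) ->
  filterlim z (at_right 0) (locally 1).
Proof.
  intros Heps Hz. apply filterlim_at_right_0_locally_1. intros xs Hxs.
  set (xs' := Rmax xs (1 / 2)).
  assert (Hxs' : xs <= xs' /\ 0 < xs' < 1)
    by (unfold xs'; split;
        [apply Rmax_l | split; [pose proof (Rmax_r xs (1 / 2)) | apply Rmax_lub_lt]]; lra).
  destruct (numer_pos_near_0 xs' ltac:(lra)) as [a2 [Ha2 Hpos]].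
  exists (Rmin eps a2). split; [apply Rmin_glb_lt; lra|].
  intros a Ha. pose proof (Rmin_l eps a2). pose proof (Rmin_r eps a2).
  destruct (Hz a ltac:(lra)) as [Hc [Hza Nza]]. specialize (Hpos a ltac:(lra)).
  split; [|lra].
  destruct (Rlt_le_dec xs' (z a)) as [|Hle]; [lra|].
  destruct (Req_dec (z a) xs') as [Heq|Hne]; [rewrite <- Heq in Hpos; lra|].
  pose proof (numer_decreasing a ltac:(lra) Hc (z a) xs' ltac:(lra) ltac:(lra)). lra.
Qed.

End Profile.

Theorem lemma4p7 (u0 f : R -> R)
  (* standing assumptions on u0 *)
  (Hu0_smooth : forall (n : nat) (x : R), ex_derive_n u0 n x)
  (Hu0_decr : forall x y : R, x < y -> u0 y < u0 x)
  (Hu0_range : forall x : R, 0 < u0 x < 1)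
  (Hu0_minf : is_lim u0 m_infty 1)
  (Hu0_pinf : is_lim u0 p_infty 0)
  (* f is the inverse of u0 *)
  (Hf_inv : forall x : R, f (u0 x) = x)
  (* f smooth on (0,1) with f' < 0 *)
  (Hf_smooth : forall (n : nat) (u : R), 0 < u < 1 -> ex_derive_n f n u)
  (Hf_neg : forall u : R, 0 < u < 1 -> Derive f u < 0)
  (* f''' < 0 near 0 and near 1 *)
  (Hf3_0 : exists d : R, 0 < d /\ forall u : R, 0 < u < d -> Derive_n f 3 u < 0)
  (Hf3_1 : exists d : R, 0 < d /\ forall u : R, 1 - d < u < 1 -> Derive_n f 3 u < 0) :
  exists (eps : R) (xc : R -> R),
    0 < eps <= 1 /\
    (forall u3 : R, 0 < u3 < eps ->
       (* xc u3 is a critical point in (0,1) *)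
       (0 < xc u3 < 1 /\ is_derive (fun xi => J0 f xi u3) (xc u3) 0) /\
       (* it is the only critical point in (0,1) *)
       (forall y : R, 0 < y < 1 -> is_derive (fun xi => J0 f xi u3) y 0 -> y = xc u3) /\
       (* it is a minimizing point over (0,1) *)
       (forall y : R, 0 < y < 1 -> J0 f (xc u3) u3 <= J0 f y u3) /\
       (* and the only minimizing point *)
       (forall y : R, 0 < y < 1 ->
          (forall z : R, 0 < z < 1 -> J0 f y u3 <= J0 f z u3) -> y = xc u3)) /\
    (* the critical point tends to 1 as u3 -> 0+ *)
    filterlim xc (at_right 0) (locally 1).
Proof.
  (* Only the range of u0 and f (u0 x) = x are needed: together they make f map (0,1) onto R. *)
  assert (Hf_onto : forall y, exists t, 0 < t < 1 /\ f t = y)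
    by (intros y; exists (u0 y); split; [apply Hu0_range | apply Hf_inv]).
  destruct (numer_has_root_for_small_a f Hf_smooth Hf_neg Hf_onto Hf3_0 Hf3_1) as [eps [Heps Hroot]].
  set (xc := fun a => epsilon (inhabits 0) (fun z => 0 < z < 1 /\ numer f a z = 0)).
  assert (Hxc : forall a, 0 < a < eps ->
    (forall x, 0 < x < 1 -> moment f 2 a x < 0) /\ 0 < xc a < 1 /\ numer f a (xc a) = 0).
  { intros a Ha. destruct (Hroot a Ha) as [Hc Hex]. split; [exact Hc | exact (epsilon_spec _ _ Hex)]. }
  exists eps, xc. split; [exact Heps|]. split.
  - intros u3 Hu3. destruct (Hxc u3 Hu3) as [Hc [Hz Nz]].
    exact (J0_unique_critical_minimizer f Hf_smooth u3 ltac:(lra) Hc (xc u3) Hz Nz).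
  - exact (numer_roots_tend_to_1 f Hf_smooth Hf_neg Hf_onto Hf3_0 eps xc ltac:(lra) Hxc).
Qed.
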